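(* Let $\mathrm{M}$ be the 2-space group $\ast333$ (IT number 14, $p3m1$), so that $E^2/\mathrm{M}$ is an equilateral triangle. Let t-ref. be the symmetry of $E^2/\mathrm{M}$ given by reflection in the perpendicular bisector of a side, and 3-rot. the rotation by $120^\circ$ about the center of the triangle. Then $\mathrm{Sym}(\mathrm{M})$ is the dihedral group $\langle \text{t-ref.}, \text{3-rot.}\rangle$ of order 6, $\mathrm{Sym}(\mathrm{M})=\mathrm{Aff}(\mathrm{M})$, and $\Omega:\mathrm{Aff}(\mathrm{M})\to\mathrm{Out}(\mathrm{M})$ is an isomorphism.
   Context: A 2-space group is a discrete group of isometries of $E^2$ with compact quotient. Affine maps of $E^2$ are written $a+A$ ($x\mapsto a+Ax$). For a 2-space group $\mathrm{M}$, let $N_A(\mathrm{M})$ be its normalizer in the affine group of $E^2$; each $a+A\in N_A(\mathrm{M})$ induces an affinity $(a+A)_\star:\mathrm{M}x\mapsto\mathrm{M}(a+Ax)$ of the flat orbifold $E^2/\mathrm{M}$. $\mathrm{Aff}(\mathrm{M})$ is the group of all such affinities and $\mathrm{Sym}(\mathrm{M})=\mathrm{Isom}(E^2/\mathrm{M})$ its subgroup of isometries. $\Omega:\mathrm{Aff}(\mathrm{M})\to\mathrm{Out}(\mathrm{M})$ sends $(a+A)_\star$ to the outer automorphism class of $g\mapsto(a+A)g(a+A)^{-1}$ on $\mathrm{M}$. *)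

From mathcomp Require Import all_boot all_order all_algebra.
From mathcomp Require Import all_classical all_reals.
Set Implicit Arguments. Unset Strict Implicit. Unset Printing Implicit Defensive.
Import Order.TTheory GRing.Theory Num.Theory.
Local Open Scope ring_scope.

Section Defs.
Variable R : realType.

Definition pt := 'cV[R]_2.
Definition aff := ('cV[R]_2 * 'M[R]_2)%type.

Definition vec2 (x y : R) : pt := \col_(i < 2) (if i == 0 :> nat then x else y).
Definition mx2 (a b c d : R) : 'M[R]_2 :=
  \matrix_(i < 2, j < 2)
    (if i == 0 :> nat then (if j == 0 :> nat then a else b)
     else (if j == 0 :> nat then c else d)).

Definition app (g : aff) (x : pt) : pt := g.1 + g.2 *m x.
Definition amul (g h : aff) : aff := (g.1 + g.2 *m h.1, g.2 *m h.2).
Definition aone : aff := (0, 1%:M).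
Definition ainv (g : aff) : aff := (- (invmx g.2 *m g.1), invmx g.2).
Definition apow (g : aff) (n : nat) : aff := iter n (amul g) aone.
Definition is_affine (g : aff) : Prop := g.2 \in unitmx.

Definition enorm (x : pt) : R := Num.sqrt (x 0 0 ^+ 2 + x 1 0 ^+ 2).

(* reflection in the line through p with unit direction u:  x |-> p + (2uu^T - I)(x - p) *)
Definition refl (p u : pt) : aff :=
  let A := (2%:R *: (u *m u^T)) - 1%:M in (p - A *m p, A).
(* the map x |-> c + A (x - c) *)
Definition about (c : pt) (A : 'M[R]_2) : aff := (c - A *m c, A).

Definition s3 : R := Num.sqrt 3.

Definition P0 : pt := vec2 0 0.
Definition P1 : pt := vec2 1 0.
Definition P2 : pt := vec2 (1/2) (s3/2).

Definition r01 : aff := refl P0 (vec2 1 0).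
Definition r02 : aff := refl P0 (vec2 (1/2) (s3/2)).
Definition r12 : aff := refl P1 (vec2 (-(1/2)) (s3/2)).

Inductive gen_by (S : aff -> Prop) : aff -> Prop :=
| gen_in g : S g -> gen_by S g
| gen_one : gen_by S aone
| gen_mul g h : gen_by S g -> gen_by S h -> gen_by S (amul g h)
| gen_inv g : gen_by S g -> gen_by S (ainv g).

(* M = *333 = p3m1: the group generated by the reflections in the sides of an
   equilateral triangle; its quotient E^2/M is that triangle *)
Definition inM : aff -> Prop := gen_by (fun g => g = r01 \/ g = r02 \/ g = r12).

Definition aconj (g m : aff) : aff := amul (amul g m) (ainv g).

Definition inNA (g : aff) : Prop :=
  is_affine g /\ (forall m, inM m <-> inM (aconj g m)).

Definition orbeq (x y : pt) : Prop := exists m, inM m /\ app m y = x.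

(* (a+A)_* = (b+B)_* as maps of the orbifold E^2/M *)
Definition aff_eq (g h : aff) : Prop := forall x, orbeq (app g x) (app h x).

Definition odist (x y : pt) : R :=
  inf [set r | exists m, inM m /\ r = enorm (x - app m y)].

Definition induces_isometry (g : aff) : Prop :=
  forall x y, odist (app g x) (app g y) = odist x y.

Definition is_autM (phi : aff -> aff) : Prop :=
  [/\ (forall m, inM m -> inM (phi m)),
      (forall m1 m2, inM m1 -> inM m2 -> phi (amul m1 m2) = amul (phi m1) (phi m2)),
      (forall m1 m2, inM m1 -> inM m2 -> phi m1 = phi m2 -> m1 = m2) &
      (forall n, inM n -> exists m, inM m /\ phi m = n)].

(* phi and psi define the same element of Out(M) *)
Definition out_eq (phi psi : aff -> aff) : Prop :=
  exists k, inM k /\ forall m, inM m -> phi m = aconj k (psi m).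

(* t-ref.: reflection in the perpendicular bisector x = 1/2 of the side P0P1 *)
Definition tref : aff := refl (vec2 (1/2) 0) (vec2 0 1).
(* 3-rot.: rotation by 120 degrees about the centre of the triangle *)
Definition rot3 : aff := about (vec2 (1/2) (s3/6)) (mx2 (-(1/2)) (-(s3/2)) (s3/2) (-(1/2))).

End Defs.

(* M is generated by the reflections in the sides of the triangle P0 P1 P2: it is
   the semidirect product of the lattice L spanned by e1 = (3/2, sqrt 3/2) and
   e2 = (0, sqrt 3) with the point group W of order 6 fixing P0.  An affinity g
   normalizing M conjugates the reflections of W into reflections of W; this forces
   its linear part to be +-C with C in W (the sign is +-1 because g and g^-1 both
   preserve L) and its translation part to be a vertex of the triangle modulo L.
   Hence g lies in one of the six cosets of M meeting <t-ref., 3-rot.>, which are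
   distinct because they permute the orbits of the three vertices differently.
   Linear parts in +-W are orthogonal, so every affinity is an isometry.  Omega is
   injective because only the identity centralizes M.  It is surjective because an
   automorphism of M preserves the translations (the elements commuting with all
   their conjugates), hence acts on L through a matrix B; B conjugates reflections
   of W into reflections of W, and a suitable translation part a makes (a, B)
   conjugate the generators of M exactly as the automorphism does. *)

From mathcomp Require Import all_boot all_order all_algebra.
From mathcomp Require Import all_classical all_reals.
From mathcomp Require Import ring lra zify.
Import Order.TTheory GRing.Theory Num.Theory.
Local Open Scope ring_scope.
Set Implicit Arguments. Unset Strict Implicit. Unset Printing Implicit Defensive.

Section P3m1.
Variable R : realType.

(** * Coordinates adapted to the triangle *)

Lemma s3_sqr : s3 R * s3 R = 3.
Proof. by rewrite /s3 -expr2 sqr_sqrtr // ler0n. Qed.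

Lemma s3_neq0 : s3 R != 0.
Proof. by rewrite /s3 sqrtr_eq0 -ltNge ltr0n. Qed.

Lemma ord2P (i : 'I_2) : i = 0 \/ i = 1.
Proof. by case: i => [[|[|k]] Hk] //; [left | right]; exact: val_inj. Qed.

Lemma sum_ord2 (F : 'I_2 -> R) : \sum_(k < 2) F k = F 0 + F 1.
Proof. by rewrite !big_ord_recl big_ord0 addr0; congr (F _ + F _); apply: val_inj. Qed.

Local Ltac entrywise :=
  let i := fresh "i" in let j := fresh "j" in
  apply/matrixP => i j; rewrite !mxE ?sum_ord2 ?mxE;
  case: (ord2P i) => ->; try case: (ord2P j) => ->.

Lemma vec2_eta (v : pt R) : v = vec2 (v 0 0) (v 1 0).
Proof. by entrywise; rewrite (ord1 j). Qed.

Lemma mx2_eta (A : 'M[R]_2) : A = mx2 (A 0 0) (A 0 1) (A 1 0) (A 1 1).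
Proof. by entrywise. Qed.

Lemma vec2_inj (x y x' y' : R) : vec2 x y = vec2 x' y' -> x = x' /\ y = y'.
Proof. by move=> /matrixP e; split; [move: (e 0 0)|move: (e 1 0)]; rewrite !mxE. Qed.

Lemma mx2_inj (a b c d a' b' c' d' : R) :
  mx2 a b c d = mx2 a' b' c' d' -> [/\ a = a', b = b', c = c' & d = d'].
Proof.
by move=> /matrixP e; split; [move: (e 0 0)|move: (e 0 1)|move: (e 1 0)|move: (e 1 1)];
  rewrite !mxE.
Qed.

Lemma mx2_mul (a b c d a' b' c' d' : R) :
  mx2 a b c d *m mx2 a' b' c' d' =
  mx2 (a * a' + b * c') (a * b' + b * d') (c * a' + d * c') (c * b' + d * d').
Proof. by entrywise. Qed.

Lemma mx2_mulv (a b c d x y : R) :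
  mx2 a b c d *m vec2 x y = vec2 (a * x + b * y) (c * x + d * y).
Proof. by entrywise. Qed.

Lemma vec2D (x y x' y' : R) : vec2 x y + vec2 x' y' = vec2 (x + x') (y + y').
Proof. by entrywise. Qed.

Lemma vec2N (x y : R) : - vec2 x y = vec2 (- x) (- y).
Proof. by entrywise. Qed.

Lemma vec2Z (k x y : R) : k *: vec2 x y = vec2 (k * x) (k * y).
Proof. by entrywise. Qed.

Lemma vec2_0 : 0 = vec2 0 0 :> pt R.
Proof. by entrywise. Qed.

Lemma vec2_outer (x y : R) : vec2 x y *m (vec2 x y)^T = mx2 (x * x) (x * y) (y * x) (y * y).
Proof. by entrywise; rewrite big_ord1 !mxE. Qed.

Lemma mx2D (a b c d a' b' c' d' : R) :
  mx2 a b c d + mx2 a' b' c' d' = mx2 (a + a') (b + b') (c + c') (d + d').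
Proof. by entrywise. Qed.

Lemma mx2N (a b c d : R) : - mx2 a b c d = mx2 (- a) (- b) (- c) (- d).
Proof. by entrywise. Qed.

Lemma mx2Z (k a b c d : R) : k *: mx2 a b c d = mx2 (k * a) (k * b) (k * c) (k * d).
Proof. by entrywise. Qed.

Lemma mx2_1 : 1%:M = mx2 1 0 0 1 :> 'M[R]_2.
Proof. by entrywise. Qed.

(* Measuring second coordinates in units of [s3 = sqrt 3] makes every point and
   matrix met below rational, so that identities between them are decided by [lra]. *)
Definition hvec (x y : R) : pt R := vec2 x (s3 R * y).
Definition hmx (a b c d : R) : 'M[R]_2 := mx2 a (s3 R * b) (s3 R * c) d.

Lemma hvec_eta (v : pt R) : v = hvec (v 0 0) (v 1 0 / s3 R).
Proof. by rewrite /hvec mulrC divfK ?s3_neq0 // -vec2_eta. Qed.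

Lemma hmx_eta (A : 'M[R]_2) : A = hmx (A 0 0) (A 0 1 / s3 R) (A 1 0 / s3 R) (A 1 1).
Proof. by rewrite /hmx !(mulrC (s3 R)) !divfK ?s3_neq0 // -mx2_eta. Qed.

Lemma hvec_inj (x y x' y' : R) : hvec x y = hvec x' y' -> x = x' /\ y = y'.
Proof. by move=> /vec2_inj [-> /(mulfI s3_neq0)]. Qed.

Lemma hmx_inj (a b c d a' b' c' d' : R) :
  hmx a b c d = hmx a' b' c' d' -> [/\ a = a', b = b', c = c' & d = d'].
Proof. by move=> /mx2_inj [-> /(mulfI s3_neq0) -> /(mulfI s3_neq0) ->]. Qed.

Lemma hmx_mul (a b c d a' b' c' d' : R) :
  hmx a b c d *m hmx a' b' c' d' =
  hmx (a * a' + 3 * b * c') (a * b' + b * d') (c * a' + d * c') (3 * c * b' + d * d').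
Proof. by rewrite /hmx mx2_mul -s3_sqr; congr mx2; ring. Qed.

Lemma hmx_mulv (a b c d x y : R) :
  hmx a b c d *m hvec x y = hvec (a * x + 3 * b * y) (c * x + d * y).
Proof. by rewrite /hmx /hvec mx2_mulv -s3_sqr; congr vec2; ring. Qed.

Lemma hvecD (x y x' y' : R) : hvec x y + hvec x' y' = hvec (x + x') (y + y').
Proof. by rewrite /hvec vec2D mulrDr. Qed.

Lemma hvecN (x y : R) : - hvec x y = hvec (- x) (- y).
Proof. by rewrite /hvec vec2N mulrN. Qed.

Lemma hvecB (x y x' y' : R) : hvec x y - hvec x' y' = hvec (x - x') (y - y').
Proof. by rewrite hvecN hvecD. Qed.

Lemma hvecZ (k x y : R) : k *: hvec x y = hvec (k * x) (k * y).
Proof. by rewrite /hvec vec2Z mulrCA. Qed.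

Lemma hmxZ (k a b c d : R) : k *: hmx a b c d = hmx (k * a) (k * b) (k * c) (k * d).
Proof. by rewrite /hmx mx2Z !(mulrCA k). Qed.

Lemma hvec0 : 0 = hvec 0 0.
Proof. by rewrite /hvec mulr0 vec2_0. Qed.

Lemma hmx1 : 1%:M = hmx 1 0 0 1.
Proof. by rewrite /hmx mulr0 mx2_1. Qed.

Lemma mulmx1_invmx (A B : 'M[R]_2) : A *m B = 1%:M -> invmx A = B.
Proof.
move=> AB1; have [uA _] := mulmx1_unit AB1.
by rewrite -[invmx A]mulmx1 -AB1 mulmxA mulVmx // mul1mx.
Qed.

Section HmxInverse.
Variables a b c d : R.
Let D := a * d - 3 * b * c.
Hypothesis D_neq0 : D != 0.

Lemma hmx_mulV : hmx a b c d *m hmx (d / D) (- b / D) (- c / D) (a / D) = 1%:M.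
Proof. by rewrite hmx_mul hmx1; congr hmx; rewrite /D; field. Qed.

Lemma hmx_unit : hmx a b c d \in unitmx.
Proof. by case: (mulmx1_unit hmx_mulV). Qed.

Lemma hmx_inv : invmx (hmx a b c d) = hmx (d / D) (- b / D) (- c / D) (a / D).
Proof. exact: mulmx1_invmx hmx_mulV. Qed.

End HmxInverse.

(** * The affine group *)

Implicit Types (f g h m n : aff R) (v w x : pt R) (A B C : 'M[R]_2) (k : nat).

Lemma app_amul g h x : app (amul g h) x = app g (app h x).
Proof. by rewrite /app /amul /= mulmxDr mulmxA addrA. Qed.

Lemma app_aone x : app (aone R) x = x.
Proof. by rewrite /app /aone /= mul1mx add0r. Qed.

Lemma app_sub g x y : app g x - app g y = g.2 *m (x - y).
Proof. by rewrite /app mulmxBr opprD addrACA subrr add0r. Qed.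

Lemma amulA f g h : amul (amul f g) h = amul f (amul g h).
Proof. by rewrite /amul /= mulmxDr !mulmxA addrA. Qed.

Lemma amul1g g : amul (aone R) g = g.
Proof. by case: g => a A; rewrite /amul /aone /= !mul1mx add0r. Qed.

Lemma amulg1 g : amul g (aone R) = g.
Proof. by case: g => a A; rewrite /amul /aone /= mulmx0 addr0 mulmx1. Qed.

Lemma amulgV g : is_affine g -> amul g (ainv g) = aone R.
Proof. by case: g => a A uA; rewrite /amul /ainv /= mulmxN mulKVmx // subrr mulmxV. Qed.

Lemma amulVg g : is_affine g -> amul (ainv g) g = aone R.
Proof. by case: g => a A uA; rewrite /amul /ainv /= mulVmx // addrC subrr. Qed.

Lemma appK g : is_affine g -> cancel (app g) (app (ainv g)).
Proof. by move=> ug x; rewrite -app_amul amulVg // app_aone. Qed.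

Lemma appVK g : is_affine g -> cancel (app (ainv g)) (app g).
Proof. by move=> ug x; rewrite -app_amul amulgV // app_aone. Qed.

Lemma affine1 : is_affine (aone R).
Proof. exact: unitmx1. Qed.

Lemma affineV g : is_affine g -> is_affine (ainv g).
Proof. by rewrite /is_affine unitmx_inv. Qed.

Lemma affineM g h : is_affine g -> is_affine h -> is_affine (amul g h).
Proof. by rewrite /is_affine unitmx_mul => -> ->. Qed.

Lemma ainv_unique g h : is_affine g -> amul g h = aone R -> h = ainv g.
Proof. by move=> ug gh1; rewrite -[h]amul1g -(amulVg ug) amulA gh1 amulg1. Qed.

Lemma ainvK g : is_affine g -> ainv (ainv g) = g.
Proof. by move=> ug; symmetry; apply: ainv_unique (amulVg ug); apply: affineV. Qed.

Lemma ainvM g h : is_affine g -> is_affine h -> ainv (amul g h) = amul (ainv h) (ainv g).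
Proof.
move=> ug uh; symmetry; apply: ainv_unique; first exact: affineM.
by rewrite amulA -[amul h _]amulA amulgV // amul1g amulgV.
Qed.

Lemma ainv1 : ainv (aone R) = aone R.
Proof. by symmetry; apply: ainv_unique (amul1g _); apply: affine1. Qed.

Lemma aconjM g m n : is_affine g -> aconj g (amul m n) = amul (aconj g m) (aconj g n).
Proof. by move=> ug; rewrite /aconj !amulA -[amul (ainv g) _]amulA amulVg // amul1g. Qed.

Lemma aconj_comp g h m : is_affine g -> is_affine h ->
  aconj (amul g h) m = aconj g (aconj h m).
Proof. by move=> ug uh; rewrite /aconj ainvM // !amulA. Qed.

Lemma aconjV g m : is_affine g -> is_affine m -> aconj g (ainv m) = ainv (aconj g m).
Proof.
move=> ug um; rewrite /aconj !ainvM ?ainvK ?amulA //;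
  by repeat apply: affineM => //; apply: affineV.
Qed.

Lemma aconj1g m : aconj (aone R) m = m.
Proof. by rewrite /aconj ainv1 amulg1 amul1g. Qed.

Lemma aconjK g m : is_affine g -> aconj (ainv g) (aconj g m) = m.
Proof. by move=> ug; rewrite -aconj_comp ?amulVg ?aconj1g //; apply: affineV. Qed.

Lemma aconjVK g m : is_affine g -> aconj g (aconj (ainv g) m) = m.
Proof. by move=> ug; rewrite -aconj_comp ?amulgV ?aconj1g //; apply: affineV. Qed.

Lemma aconjE g a A : is_affine g -> aconj g (a, A) =
  (g.1 + g.2 *m a - g.2 *m A *m invmx g.2 *m g.1, g.2 *m A *m invmx g.2).
Proof. by case: g => b B uB; rewrite /aconj /amul /ainv /= mulmxN !mulmxA. Qed.

Definition transl v : aff R := (v, 1%:M).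

Lemma affine_transl v : is_affine (transl v).
Proof. exact: unitmx1. Qed.

Lemma amul_transl v w : amul (transl v) (transl w) = transl (v + w).
Proof. by rewrite /amul /transl /= mul1mx mulmx1. Qed.

Lemma ainv_transl v : ainv (transl v) = transl (- v).
Proof. by rewrite /ainv /transl /= invmx1 mul1mx. Qed.

Lemma aconj_transl g v : is_affine g -> aconj g (transl v) = transl (g.2 *m v).
Proof.
move=> ug; rewrite aconjE // /transl /= mulmx1 mulmxV //; congr pair.
by rewrite mul1mx addrC addKr.
Qed.

Lemma apow0 g : apow g 0 = aone R.
Proof. by []. Qed.

Lemma apowS g (n : nat) : apow g n.+1 = amul g (apow g n).
Proof. by []. Qed.

(** * The point group and the lattice of M *)

Local Ltac hsolve := first [reflexivity | congr (hmx _ _ _ _); lra | congr (hvec _ _); lra].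

(* [refθ] is the reflection in the line through the origin at angle θ. *)
Definition rot120 : 'M[R]_2 := hmx (- (1/2)) (- (1/2)) (1/2) (- (1/2)).
Definition rot240 : 'M[R]_2 := hmx (- (1/2)) (1/2) (- (1/2)) (- (1/2)).
Definition ref0 : 'M[R]_2 := hmx 1 0 0 (-1).
Definition ref60 : 'M[R]_2 := hmx (- (1/2)) (1/2) (1/2) (1/2).
Definition ref90 : 'M[R]_2 := hmx (-1) 0 0 1.
Definition ref120 : 'M[R]_2 := hmx (- (1/2)) (- (1/2)) (- (1/2)) (1/2).

Definition pointM (A : 'M[R]_2) : Prop :=
  A = 1%:M \/ A = rot120 \/ A = rot240 \/ A = ref0 \/ A = ref60 \/ A = ref120.

Local Ltac pointM_cases := case=> [->|[->|[->|[->|[->|->]]]]].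
Local Ltac unfold_pointM := rewrite /pointM ?hmx1 /rot120 /rot240 /ref0 /ref60 /ref120.
Local Ltac pick_pointM := first [left; hsolve | right; pick_pointM | hsolve].

Lemma pointM1 : pointM 1%:M.
Proof. by left. Qed.

Lemma pointM_mul A B : pointM A -> pointM B -> pointM (A *m B).
Proof. by unfold_pointM; pointM_cases; pointM_cases; rewrite hmx_mul; pick_pointM. Qed.

Lemma pointM_order A : pointM A -> A *m (A *m (A *m (A *m (A *m A)))) = 1%:M.
Proof. by unfold_pointM; pointM_cases; rewrite !hmx_mul; hsolve. Qed.

Lemma pointM_unit A : pointM A -> A \in unitmx.
Proof. by move=> /pointM_order /mulmx1_unit []. Qed.

Lemma pointM_inv A : pointM A -> pointM (invmx A).
Proof. by move=> wA; rewrite (mulmx1_invmx (pointM_order wA)); do 4 apply: pointM_mul => //. Qed.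

Definition lat (a c : int) : pt R := hvec (3/2 * a%:~R) (a%:~R / 2 + c%:~R).
Definition latM (v : pt R) : Prop := exists a c, v = lat a c.
Definition e1 : pt R := lat 1 0.
Definition e2 : pt R := lat 0 1.

Local Ltac solve_latM := rewrite /latM /lat;
  first [ exists 0, 0; hsolve | exists 1, 0; hsolve | exists 0, 1; hsolve
        | exists (-1), 0; hsolve | exists 0, (-1); hsolve | exists 1, (-1); hsolve
        | exists (-1), 1; hsolve | exists 1, 1; hsolve | exists (-1), (-1); hsolve ].

Lemma latM_lat a c : latM (lat a c).
Proof. by exists a, c. Qed.

Lemma latM0 : latM 0.
Proof. by exists 0, 0; rewrite hvec0 /lat; hsolve. Qed.

Lemma latMD v w : latM v -> latM w -> latM (v + w).
Proof. by move=> [a [c ->]] [a' [c' ->]]; exists (a + a'), (c + c'); rewrite /lat hvecD; hsolve. Qed.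

Lemma latMN v : latM v -> latM (- v).
Proof. by move=> [a [c ->]]; exists (- a), (- c); rewrite /lat hvecN; hsolve. Qed.

Lemma latMZ (z : int) v : latM v -> latM (z%:~R *: v).
Proof. by move=> [a [c ->]]; exists (z * a), (z * c); rewrite /lat hvecZ; hsolve. Qed.

Lemma lat_comb a c : lat a c = a%:~R *: e1 + c%:~R *: e2.
Proof. by rewrite /e1 /e2 /lat !hvecZ hvecD; hsolve. Qed.

Lemma latM_ind (P : pt R -> Prop) : P e1 -> P e2 ->
  (forall v w, latM v -> latM w -> P v -> P w -> P (v - w)) -> forall v, latM v -> P v.
Proof.
move=> P1 P2 PB.
have le1 : latM e1 := latM_lat 1 0; have le2 : latM e2 := latM_lat 0 1.
have P0 : P 0 by rewrite -(subrr e1); apply: PB.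
have PN v : latM v -> P v -> P (- v) by move=> lv Pv; rewrite -sub0r; apply: PB => //; apply: latM0.
have PD v w : latM v -> latM w -> P v -> P w -> P (v + w).
  by move=> lv lw Pv Pw; rewrite -[w]opprK; apply: PB => //; [apply: latMN | apply: PN].
have PZ (z : int) v : latM v -> P v -> P (z%:~R *: v).
  move=> lv Pv; have PZn (n : nat) : latM (n%:R *: v) /\ P (n%:R *: v).
    elim: n => [|n [ln Pn]]; first by rewrite scale0r; split; [apply: latM0 | apply: P0].
    by rewrite -natr1 scalerDl scale1r; split; [apply: latMD | apply: PD].
  case: z => n; first by rewrite -pmulrn; case: (PZn n).
  by rewrite NegzE mulrNz scaleNr -pmulrn; case: (PZn n.+1) => ? ?; apply: PN.
move=> v [a [c ->]]; rewrite lat_comb.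
by apply: PD; do ?[apply: latMZ | apply: PZ].
Qed.

Lemma latM_linear (A : 'M[R]_2) : latM (A *m e1) -> latM (A *m e2) ->
  forall v, latM v -> latM (A *m v).
Proof.
move=> l1 l2 v [a [c ->]]; rewrite lat_comb mulmxDr -!scalemxAr.
by apply: latMD; apply: latMZ.
Qed.

Lemma pointM_latM A v : pointM A -> latM v -> latM (A *m v).
Proof.
move=> wA; apply: latM_linear; move: wA; unfold_pointM; rewrite /e1 /e2 /lat;
  by pointM_cases; rewrite hmx_mulv; solve_latM.
Qed.

(** * The group M *)

Local Ltac to_hcoords := rewrite /hvec /hmx; have := s3_sqr;
  rewrite ?vec2_outer ?mx2Z ?mx2_1 ?mx2N ?mx2D ?mx2_mulv ?vec2N ?vec2D => ?;
  congr pair; first [congr vec2; lra | congr mx2; lra | idtac].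

Lemma r01E : r01 R = (0, ref0).
Proof. by rewrite /r01 /refl /P0 /ref0 vec2_0; to_hcoords. Qed.

Lemma r02E : r02 R = (0, ref60).
Proof. by rewrite /r02 /refl /P0 /ref60 vec2_0; to_hcoords. Qed.

Lemma r12E : r12 R = (e1, ref120).
Proof. by rewrite /r12 /refl /P1 /ref120 /e1 /lat; to_hcoords. Qed.

Lemma trefE : tref R = (hvec 1 0, ref90).
Proof. by rewrite /tref /refl /ref90; to_hcoords. Qed.

Lemma rot3E : rot3 R = (hvec 1 0, rot120).
Proof. by rewrite /rot3 /about /mx2 /rot120; to_hcoords. Qed.

Lemma inM1 : inM (aone R).
Proof. exact: gen_one. Qed.

Lemma inMM m n : inM m -> inM n -> inM (amul m n).
Proof. exact: gen_mul. Qed.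

Lemma inMV m : inM m -> inM (ainv m).
Proof. exact: gen_inv. Qed.

Lemma inM_r01 : inM (r01 R).
Proof. by apply: gen_in; left. Qed.

Lemma inM_r02 : inM (r02 R).
Proof. by apply: gen_in; right; left. Qed.

Lemma inM_r12 : inM (r12 R).
Proof. by apply: gen_in; right; right. Qed.

Lemma inM_ref0 : inM (0, ref0).
Proof. by rewrite -r01E; apply: inM_r01. Qed.

Lemma inM_ref60 : inM (0, ref60).
Proof. by rewrite -r02E; apply: inM_r02. Qed.

Lemma inM_pointM_latM m : inM m -> pointM m.2 /\ latM m.1.
Proof.
elim=> {m} [g [->|[->|->]] | | g h _ [wg lg] _ [wh lh] | g _ [wg lg]].
- by rewrite r01E; split; [unfold_pointM; pick_pointM | apply: latM0].
- by rewrite r02E; split; [unfold_pointM; pick_pointM | apply: latM0].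
- by rewrite r12E; split; [unfold_pointM; pick_pointM | apply: latM_lat].
- by split; [apply: pointM1 | apply: latM0].
- by split; [apply: pointM_mul | apply: latMD => //; apply: pointM_latM].
- by split; [apply: pointM_inv | apply/latMN/pointM_latM => //; apply: pointM_inv].
Qed.

Lemma inM_affine m : inM m -> is_affine m.
Proof. by move=> /inM_pointM_latM [/pointM_unit]. Qed.

Lemma inM_linear A : pointM A -> inM (0, A).
Proof.
have inM0M (X Y : 'M[R]_2) : inM (0, X) -> inM (0, Y) -> inM (0, X *m Y).
  by move=> hX hY; have := inMM hX hY; rewrite /amul /= mulmx0 addr0.
have e_rot120 : rot120 = ref60 *m ref0.
  by rewrite /rot120 /ref0 /ref60 hmx_mul; hsolve.
have e_rot240 : rot240 = ref0 *m ref60.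
  by rewrite /rot240 /ref0 /ref60 hmx_mul; hsolve.
have e_ref120 : ref120 = ref0 *m ref60 *m ref0.
  by rewrite /ref120 /ref0 /ref60 !hmx_mul; hsolve.
pointM_cases; rewrite ?e_rot120 ?e_rot240 ?e_ref120.
- exact: inM1.
- exact: inM0M _ _ inM_ref60 inM_ref0.
- exact: inM0M _ _ inM_ref0 inM_ref60.
- exact: inM_ref0.
- exact: inM_ref60.
- exact: inM0M _ _ (inM0M _ _ inM_ref0 inM_ref60) inM_ref0.
Qed.

Lemma inM_aconj g m : inM g -> inM m -> inM (aconj g m).
Proof. by move=> hg hm; apply: inMM; [apply: inMM | apply: inMV]. Qed.

Lemma inM_transl_e1 : inM (transl e1).
Proof.
have w : pointM ref120 by do 5 right.
have := inMM inM_r12 (inM_linear w); rewrite r12E /amul /= mulmx0 addr0.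
by have -> : ref120 *m ref120 = 1%:M by rewrite /ref120 hmx_mul hmx1; hsolve.
Qed.

Lemma inM_transl_e2 : inM (transl e2).
Proof.
have -> : e2 = e1 - ref0 *m e1 by rewrite /e1 /e2 /lat /ref0 hmx_mulv hvecB; hsolve.
have := inM_aconj inM_ref0 inM_transl_e1.
rewrite aconj_transl /=; last exact: inM_affine inM_ref0.
move=> h; by rewrite -amul_transl -ainv_transl; apply: inMM inM_transl_e1 (inMV h).
Qed.

Lemma inM_transl v : latM v -> inM (transl v).
Proof.
move: v; apply: latM_ind => [||u w _ _ hu hw]; [apply: inM_transl_e1 | apply: inM_transl_e2 |].
by rewrite -amul_transl -ainv_transl; apply: inMM hu (inMV hw).
Qed.

Lemma inM_char m : inM m <-> pointM m.2 /\ latM m.1.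
Proof.
split; first exact: inM_pointM_latM.
case: m => b A [/= wA lb]; have := inMM (inM_transl lb) (inM_linear wA).
by rewrite /amul /transl /= mulmx0 addr0 mul1mx.
Qed.

(** * The affine normalizer *)

Lemma inNA_affine g : inNA g -> is_affine g.
Proof. by case. Qed.

Lemma inNA_aconj g m : inNA g -> inM m -> inM (aconj g m).
Proof. by case=> _ h /h. Qed.

Lemma inNA1 : inNA (aone R).
Proof. by split=> [|m]; [apply: affine1 | rewrite aconj1g]. Qed.

Lemma inNAV g : inNA g -> inNA (ainv g).
Proof.
move=> [ug hg]; split=> [|m]; first exact: affineV.
by rewrite (hg (aconj (ainv g) m)) aconjVK.
Qed.

Lemma inNAM g h : inNA g -> inNA h -> inNA (amul g h).
Proof.
move=> [ug hg] [uh hh]; split=> [|m]; first exact: affineM.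
by rewrite aconj_comp // (hh m) (hg (aconj h m)).
Qed.

Lemma inNA_apow g i : inNA g -> inNA (apow g i).
Proof. by move=> hg; elim: i => [|i ih] /=; [apply: inNA1 | apply: inNAM]. Qed.

Lemma aconj_gen_inM g : is_affine g ->
  inM (aconj g (r01 R)) -> inM (aconj g (r02 R)) -> inM (aconj g (r12 R)) ->
  forall m, inM m -> inM (aconj g m).
Proof.
move=> ug h01 h02 h12 m; elim=> {m} [m [->|[->|->]] // | | m n _ hm _ hn | m hm ihm].
- by rewrite /aconj amulg1 amulgV //; apply: inM1.
- by rewrite aconjM //; apply: inMM.
- by rewrite aconjV //; [apply: inMV | apply: inM_affine].
Qed.

(* The inverse of [g] is one of its powers, so conjugation by it maps M into M too. *)
Lemma inNA_of_periodic g (n : nat) : apow g n.+1 = aone R ->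
  (forall m, inM m -> inM (aconj g m)) -> inNA g.
Proof.
move=> gn1 hg; have ug : is_affine g by case: (mulmx1_unit (f_equal snd gn1)).
have ugi i : is_affine (apow g i) by elim: i => [|i ih]; [apply: affine1 | apply: affineM].
have hgi i m : inM m -> inM (aconj (apow g i) m).
  elim: i m => [|i ih] m hm /=; first by rewrite aconj1g.
  by rewrite aconj_comp //; apply/hg/ih.
split=> // m; split; first exact: hg.
by move=> /(hgi n); rewrite (ainv_unique (h := apow g n) ug gn1) aconjK.
Qed.

Lemma aconj_hmx (D x y a b c d : R) m : a * d - 3 * b * c = D -> D != 0 ->
  aconj (hvec x y, hmx a b c d) m =
  (hvec x y + hmx a b c d *m m.1
     - hmx a b c d *m m.2 *m hmx (d / D) (- b / D) (- c / D) (a / D) *m hvec x y,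
   hmx a b c d *m m.2 *m hmx (d / D) (- b / D) (- c / D) (a / D)).
Proof. by move=> <- D0; case: m => v A; rewrite aconjE ?hmx_inv //; apply: hmx_unit. Qed.

Lemma ainv_hmx (D x y a b c d : R) : a * d - 3 * b * c = D -> D != 0 ->
  ainv (hvec x y, hmx a b c d) =
  (- (hmx (d / D) (- b / D) (- c / D) (a / D) *m hvec x y),
   hmx (d / D) (- b / D) (- c / D) (a / D)).
Proof. by move=> <- D0; rewrite /ainv /= hmx_inv. Qed.

Local Ltac aconj_inM D := rewrite (aconj_hmx (D := D)) /=; [| lra | apply/eqP; lra];
  rewrite ?mulmx0 ?addr0 ?hmx_mul ?hmx_mulv ?hvecD ?hvecB;
  apply/inM_char; split; [unfold_pointM; pick_pointM | solve_latM].

Lemma apow_tref2 : apow (tref R) 2 = aone R.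
Proof.
rewrite /apow /= trefE /amul /= mulmx0 mulmx1 addr0 /ref90 hmx_mul hmx_mulv hvecD /aone hvec0 hmx1.
by congr pair; hsolve.
Qed.

Lemma apow_rot3_3 : apow (rot3 R) 3 = aone R.
Proof.
rewrite /apow /= rot3E /amul /= ?mulmx0 ?mulmx1 ?addr0 /rot120 !(hmx_mul, hmx_mulv, hvecD) /aone hvec0 hmx1.
by congr pair; hsolve.
Qed.

Lemma inNA_tref : inNA (tref R).
Proof.
apply: (inNA_of_periodic (n := 1) apow_tref2); rewrite trefE /ref90.
apply: aconj_gen_inM; first by apply: hmx_unit; apply/eqP; lra.
all: rewrite ?r01E ?r02E ?r12E /ref0 /ref60 /ref120 /e1 /lat; aconj_inM (-1 : R).
Qed.

Lemma inNA_rot3 : inNA (rot3 R).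
Proof.
apply: (inNA_of_periodic (n := 2) apow_rot3_3); rewrite rot3E /rot120.
apply: aconj_gen_inM; first by apply: hmx_unit; apply/eqP; lra.
all: rewrite ?r01E ?r02E ?r12E /ref0 /ref60 /ref120 /e1 /lat; aconj_inM (1 : R).
Qed.

Lemma inNA_pointM_conj g A : inNA g -> pointM A -> pointM (g.2 *m A *m invmx g.2).
Proof.
move=> hg /inM_linear/(inNA_aconj hg); rewrite aconjE; last exact: inNA_affine.
by case/inM_char.
Qed.

Lemma inNA_latM g v : inNA g -> latM v -> latM (g.2 *m v).
Proof.
move=> hg /inM_transl/(inNA_aconj hg); rewrite aconj_transl; last exact: inNA_affine.
by case/inM_char.
Qed.

Lemma conj_mx_involutive (n : nat) (B A0 A1 : 'M[R]_n) : B \in unitmx ->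
  B *m A0 = A1 *m B -> A0 *m A0 = 1%:M -> A1 *m A1 = 1%:M.
Proof.
move=> uB eA sqA0; rewrite -(mulmxK uB (A1 *m A1)) -(mulmxA A1 A1 B) -eA mulmxA -eA.
by rewrite -(mulmxA B A0 A0) sqA0 mulmx1 mulmxV.
Qed.

Lemma conj_mx_inj (n : nat) (B A0 A0' A1 : 'M[R]_n) : B \in unitmx ->
  B *m A0 = A1 *m B -> B *m A0' = A1 *m B -> A0 = A0'.
Proof. by move=> uB e e'; rewrite -(mulKmx uB A0) e -e' mulKmx. Qed.

Lemma conj_mx_swap (n : nat) (C X Y : 'M[R]_n) : C \in unitmx -> C *m X = Y *m C ->
  invmx C *m Y = X *m invmx C.
Proof.
move=> uC e; rewrite -[LHS](mulmxK uC) -(mulmxA (invmx C) Y C) -e.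
by rewrite mulKmx.
Qed.

Lemma pointM_ref0 : pointM ref0.
Proof. by do 3 right; left. Qed.

Lemma pointM_ref60 : pointM ref60.
Proof. by do 4 right; left. Qed.

Lemma ref0_sqr : ref0 *m ref0 = 1%:M.
Proof. by rewrite /ref0 hmx_mul hmx1; hsolve. Qed.

Lemma ref60_sqr : ref60 *m ref60 = 1%:M.
Proof. by rewrite /ref60 hmx_mul hmx1; hsolve. Qed.

Lemma ref0_neq1 : ref0 <> 1%:M.
Proof. by rewrite /ref0 hmx1 => /hmx_inj [_ _ _]; lra. Qed.

Lemma ref60_neq1 : ref60 <> 1%:M.
Proof. by rewrite /ref60 hmx1 => /hmx_inj []; lra. Qed.

Lemma ref0_neq_ref60 : ref0 <> ref60.
Proof. by rewrite /ref0 /ref60 => /hmx_inj []; lra. Qed.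

Lemma pointM_involution A : pointM A -> A *m A = 1%:M ->
  A = 1%:M \/ A = ref0 \/ A = ref60 \/ A = ref120.
Proof.
case=> [-> | [-> | [-> | wA]]]; [by left | | | by right].
all: by rewrite /rot120 /rot240 hmx_mul hmx1 => /hmx_inj [e _ _ _]; exfalso; lra.
Qed.

Local Ltac conj_witness C := exists C; split;
  [ unfold_pointM; pick_pointM
  | rewrite /rot120 /rot240 /ref0 /ref60 /ref120 ?hmx1 !hmx_mul; hsolve .. ].

Lemma reflection_pair A1 A2 :
  A1 = ref0 \/ A1 = ref60 \/ A1 = ref120 -> A2 = ref0 \/ A2 = ref60 \/ A2 = ref120 ->
  A1 <> A2 -> exists C, [/\ pointM C, C *m ref0 = A1 *m C & C *m ref60 = A2 *m C].
Proof.
case=> [-> | [-> | ->]] [-> | [-> | ->]] A12; try by case: A12.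
all: first [ conj_witness (1%:M : 'M[R]_2) | conj_witness rot120 | conj_witness rot240
        | conj_witness ref0 | conj_witness ref60 | conj_witness ref120 ].
Qed.

Lemma commute_ref0_ref60 D : D *m ref0 = ref0 *m D -> D *m ref60 = ref60 *m D ->
  D = D 0 0 *: 1%:M.
Proof.
rewrite [D]hmx_eta /ref0 /ref60 !hmx_mul hmx1 hmxZ !mxE /=.
by move=> /hmx_inj [? ? ? ?] /hmx_inj [? ? ? ?]; hsolve.
Qed.

Lemma latM_scale_e1 (l : R) : latM (l *: e1) -> exists z : int, l = z%:~R.
Proof. by rewrite /e1 /lat hvecZ => [[a [c /hvec_inj [e _]]]]; exists a; lra. Qed.

Lemma int_mul_eq1 (z z' : int) : (z%:~R : R) * z'%:~R = 1 -> z = 1 \/ z = -1.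
Proof.
move=> h; have /intUnitRing.unitzPl : z' * z = 1 by apply: (@intr_inj R); rewrite intrM mulrC h.
by rewrite qualifE => /orP [] /eqP ->; [left | right].
Qed.

Lemma pointM_conj_ref0_ref60 B A1 A2 : B \in unitmx -> pointM A1 -> pointM A2 ->
  B *m ref0 = A1 *m B -> B *m ref60 = A2 *m B ->
  exists C, [/\ pointM C, C *m ref0 = A1 *m C & C *m ref60 = A2 *m C].
Proof.
move=> uB wA1 wA2 eA1 eA2.
have reflP A A0 : pointM A -> B *m A0 = A *m B -> A0 *m A0 = 1%:M -> A0 <> 1%:M ->
    A = ref0 \/ A = ref60 \/ A = ref120.
  move=> wA eA A0sq A0n1; case: (pointM_involution wA (conj_mx_involutive uB eA A0sq)) => //.
  by move=> A_1; case: A0n1; apply: (conj_mx_inj uB eA); rewrite A_1 mul1mx mulmx1.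
apply: reflection_pair.
- exact: reflP wA1 eA1 ref0_sqr ref0_neq1.
- exact: reflP wA2 eA2 ref60_sqr ref60_neq1.
- by move=> A12; apply: ref0_neq_ref60; apply: (conj_mx_inj uB eA1); rewrite A12.
Qed.

Lemma inNA_linear_scalar g : inNA g -> exists l C, pointM C /\ g.2 = l *: C.
Proof.
move=> hg; have uB : g.2 \in unitmx by apply: inNA_affine.
have conjP A0 : pointM A0 -> exists2 A, pointM A & g.2 *m A0 = A *m g.2.
  by exists (g.2 *m A0 *m invmx g.2); [apply: inNA_pointM_conj | rewrite mulmxKV].
have [A1 wA1 eA1] := conjP ref0 pointM_ref0.
have [A2 wA2 eA2] := conjP ref60 pointM_ref60.
have [C [wC eC1 eC2]] := pointM_conj_ref0_ref60 uB wA1 wA2 eA1 eA2.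
have uC := pointM_unit wC; set D := invmx C *m g.2.
have eD : D = D 0 0 *: 1%:M.
  apply: commute_ref0_ref60; rewrite /D -mulmxA ?eA1 ?eA2 mulmxA.
    by rewrite (conj_mx_swap uC eC1) mulmxA.
  by rewrite (conj_mx_swap uC eC2) mulmxA.
exists (D 0 0), C; split=> //.
by rewrite -[g.2](mulKVmx uC) -/D {1}eD -scalemxAr mulmx1.
Qed.

Lemma inNA_linear g : inNA g ->
  exists lam C, [/\ lam = 1 \/ lam = -1, pointM C & g.2 = lam *: C].
Proof.
move=> hg; have [l [C [wC eB]]] := inNA_linear_scalar hg.
exists l, C; split=> //; have uC := pointM_unit wC.
have l0 : l != 0.
  by apply: contraTneq (inNA_affine hg) => l0; rewrite /is_affine eB l0 scale0r unitmxE det0 unitr0.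
have [z ez] : exists z : int, l = z%:~R.
  apply: latM_scale_e1; have := inNA_latM hg (pointM_latM (pointM_inv wC) (latM_lat 1 0)).
  by rewrite eB -scalemxAl mulKVmx.
have [z' ez'] : exists z' : int, l^-1 = z'%:~R.
  apply: latM_scale_e1; have := inNA_latM (inNAV hg) (pointM_latM wC (latM_lat 1 0)).
  by rewrite /= eB invmxZ ?unitmxZ ?unitfE // -scalemxAl mulKmx.
have zz' : (z%:~R : R) * z'%:~R = 1 by rewrite -ez -ez' mulfV.
by case: (int_mul_eq1 zz') => e; [left | right]; rewrite ez e.
Qed.

(* Every index [k >= 2] names [P2]. *)
Definition vertex (k : nat) : pt R :=
  if k == 0%N then P0 R else if k == 1%N then P1 R else P2 R.

Lemma vertex0 : vertex 0 = hvec 0 0.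
Proof. by rewrite /hvec mulr0. Qed.

Lemma vertex1 : vertex 1 = hvec 1 0.
Proof. by rewrite /hvec mulr0. Qed.

Lemma vertex2 : vertex 2 = hvec (1/2) (1/2).
Proof. by rewrite /vertex /P2 /hvec mul1r. Qed.

Lemma latM_fixed_ref0_ref60 a : latM (a - ref0 *m a) -> latM (a - ref60 *m a) ->
  exists p n : int, a = hvec (p%:~R + n%:~R / 2) (n%:~R / 2).
Proof.
rewrite [a]hvec_eta /ref0 /ref60 !hmx_mulv !hvecB.
move=> [a1 [c1 /hvec_inj [? ?]]] [a2 [c2 /hvec_inj [? ?]]].
by exists a2, c1; hsolve.
Qed.

Lemma vertex_lattice_coset (p n : int) : exists (k : nat) v,
  [/\ (k < 3)%N, latM v & hvec (p%:~R + n%:~R / 2) (n%:~R / 2) = vertex k + v].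
Proof.
have [q [r [epn hr]]] : exists q r : int, p = n + q * 3 + r /\ (r = 0 \/ r = 1 \/ r = 2).
  exists ((p - n) %/ 3)%Z, ((p - n) %% 3)%Z; split; first by have := divz_eq (p - n) 3; lia.
  by have := @modz_ge0 (p - n) 3 isT; have := @ltz_pmod (p - n) 3 isT; lia.
have ep : (p%:~R : R) = n%:~R + q%:~R * 3 + r%:~R by rewrite epn !intrD intrM.
case: hr => [er | [er | er]]; rewrite er in ep.
- exists 0%N, (lat (n + 2 * q) (- q)); split=> //; first exact: latM_lat.
  by rewrite vertex0 /lat hvecD; hsolve.
- exists 1%N, (lat (n + 2 * q) (- q)); split=> //; first exact: latM_lat.
  by rewrite vertex1 /lat hvecD; hsolve.
- exists 2%N, (lat (n + 2 * q + 1) (- q - 1)); split=> //; first exact: latM_lat.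
  by rewrite vertex2 /lat hvecD; hsolve.
Qed.

Definition dih (i j : nat) : aff R := amul (apow (tref R) i) (apow (rot3 R) j).

Lemma inNA_dih i j : inNA (dih i j).
Proof. by apply: inNAM; apply: inNA_apow; [apply: inNA_tref | apply: inNA_rot3]. Qed.

Local Ltac dih_witness i j := exists i, j; split=> //;
  rewrite /dih ?apowS !apow0 ?vertex0 ?vertex1 ?vertex2 ?trefE ?rot3E /aone hvec0 hmx1 hmxZ;
  rewrite (ainv_hmx (D := 1)); [| lra | apply/eqP; lra];
  rewrite /amul /= /rot120 /ref90 ?(hmx_mul, hmx_mulv, hvecD, hvecN);
  apply/inM_char => /=; split; [unfold_pointM; pick_pointM | solve_latM].

Lemma dih_vertex_coset (k : nat) (lam : R) : (k < 3)%N -> lam = 1 \/ lam = -1 ->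
  exists i j, [/\ (i < 2)%N, (j < 3)%N & inM (amul (dih i j) (ainv (vertex k, lam *: 1%:M)))].
Proof.
case: k => [|[|[|k]]] // _ [] ->;
  first [ dih_witness 0%N 0%N | dih_witness 0%N 1%N | dih_witness 0%N 2%N
        | dih_witness 1%N 0%N | dih_witness 1%N 1%N | dih_witness 1%N 2%N ].
Qed.

Lemma conjmxZ (n : nat) (l : R) (C A : 'M[R]_n) : l != 0 -> C \in unitmx ->
  (l *: C) *m A *m invmx (l *: C) = C *m A *m invmx C.
Proof.
move=> l0 uC; rewrite invmxZ ?unitmxZ ?unitfE // -!scalemxAl -scalemxAr.
by rewrite scalerA mulfV // scale1r.
Qed.

Lemma inNA_transl g lam C : inNA g -> lam != 0 -> pointM C -> g.2 = lam *: C ->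
  forall A, pointM A -> latM (invmx C *m g.1 - A *m (invmx C *m g.1)).
Proof.
move=> hg l0 wC eB A wA; have uC := pointM_unit wC.
have := inNA_aconj hg (inM_linear wA); rewrite aconjE; last exact: inNA_affine.
case/inM_char=> _ /=; rewrite mulmx0 addr0 eB conjmxZ // => /(pointM_latM (pointM_inv wC)).
by rewrite mulmxBr !mulmxA mulVmx // mul1mx.
Qed.

Lemma inNA_coset g : inNA g ->
  exists i j, [/\ (i < 2)%N, (j < 3)%N & exists2 m, inM m & g = amul m (dih i j)].
Proof.
move=> hg; have [lam [C [hl wC eB]]] := inNA_linear hg.
have l0 : lam != 0 by case: hl => ->; rewrite ?oppr_eq0 oner_eq0.
have uC := pointM_unit wC; have transl_fixed := inNA_transl hg l0 wC eB.
have [p [n ea]] := latM_fixed_ref0_ref60 (transl_fixed _ pointM_ref0) (transl_fixed _ pointM_ref60).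
have [k [v [hk lv ekv]]] := vertex_lattice_coset p n.
have [i [j [hi hj hm]]] := dih_vertex_coset hk hl.
set V := (vertex k, lam *: 1%:M) in hm.
have uV : is_affine V by rewrite /is_affine unitmxZ ?unitmx1 // unitfE.
have uD : is_affine (dih i j) by apply: inNA_affine (inNA_dih i j).
set mC := amul (transl (C *m v)) (0, C).
have inM_mC : inM mC by apply: inMM; [apply/inM_transl/pointM_latM | apply: inM_linear].
have eg : g = amul mC V.
  rewrite /mC /amul /transl /V /= !mul1mx addr0 -scalemxAr mulmx1 -eB -mulmxDr addrC.
  by rewrite -ekv -ea mulKVmx //; apply: surjective_pairing.
exists i, j; split=> //; exists (amul mC (ainv (amul (dih i j) (ainv V)))).
  by apply: inMM; last apply: inMV.
by rewrite ainvM ?ainvK ?eg ?amulA ?amulVg ?amulg1 //; apply: affineV.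
Qed.

(** * Affinities modulo M *)

Definition rot_index (k : nat) : nat := if k == 0%N then 1%N else if k == 1%N then 2%N else 0%N.
Definition tref_index (k : nat) : nat := if k == 0%N then 1%N else if k == 1%N then 0%N else 2%N.

Lemma app_rot3_vertex k : app (rot3 R) (vertex k) = vertex (rot_index k).
Proof.
rewrite rot3E /app /rot120 /=.
by case: k => [|[|k]]; rewrite ?vertex0 ?vertex1 ?vertex2 hmx_mulv hvecD; hsolve.
Qed.

Lemma app_tref_vertex k : app (tref R) (vertex k) = vertex (tref_index k).
Proof.
rewrite trefE /app /ref90 /=.
by case: k => [|[|k]]; rewrite ?vertex0 ?vertex1 ?vertex2 hmx_mulv hvecD; hsolve.
Qed.

Lemma app_apow_vertex g (f : nat -> nat) (n : nat) k :
  (forall k, app g (vertex k) = vertex (f k)) -> app (apow g n) (vertex k) = vertex (iter n f k).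
Proof. by move=> gf; elim: n => [|n ih]; rewrite ?app_aone // apowS app_amul ih gf. Qed.

Lemma app_dih_vertex i j k :
  app (dih i j) (vertex k) = vertex (iter i tref_index (iter j rot_index k)).
Proof.
by rewrite app_amul !(app_apow_vertex _ _ app_rot3_vertex, app_apow_vertex _ _ app_tref_vertex).
Qed.

Lemma pointM_vertex_latM A k : pointM A -> latM (A *m vertex k - vertex k).
Proof.
unfold_pointM; case: k => [|[|k]]; rewrite ?vertex0 ?vertex1 ?vertex2;
  by pointM_cases; rewrite hmx_mulv hvecB; solve_latM.
Qed.

Local Ltac not_three_halves a := first
  [ have /intr_inj : (3 * a)%:~R = (-2)%:~R :> R by lra
  | have /intr_inj : (3 * a)%:~R = (-1)%:~R :> R by lra
  | have /intr_inj : (3 * a)%:~R = 1%:~R :> R by lra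
  | have /intr_inj : (3 * a)%:~R = 2%:~R :> R by lra ]; lia.

Lemma latM_vertexB k l : (k < 3)%N -> (l < 3)%N -> latM (vertex k - vertex l) -> k = l.
Proof.
case: k => [|[|[|k]]] // _; case: l => [|[|[|l]]] // _;
  rewrite ?vertex0 ?vertex1 ?vertex2 hvecB // => [[a [c /hvec_inj [e _]]]];
  not_three_halves a.
Qed.

Lemma orbeq_vertex k l : orbeq (vertex k) (vertex l) -> (k < 3)%N -> (l < 3)%N -> k = l.
Proof.
move=> [m [/inM_char [wm lm] e]] hk hl; apply: latM_vertexB => //.
by rewrite -e /app -addrA; apply: latMD => //; apply: pointM_vertex_latM.
Qed.

Lemma dih_inj i j i' j' : (i < 2)%N -> (j < 3)%N -> (i' < 2)%N -> (j' < 3)%N ->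
  aff_eq (dih i j) (dih i' j') -> i = i' /\ j = j'.
Proof.
move=> hi hj hi' hj' e; move: (e (vertex 0)) (e (vertex 1)).
rewrite !app_dih_vertex => /orbeq_vertex e0 /orbeq_vertex e1; move: e0 e1 {e}.
case: i hi => [|[|i]] // _; case: j hj => [|[|[|j]]] // _;
case: i' hi' => [|[|i']] // _; case: j' hj' => [|[|[|j']]] // _ /=;
by move=> /(_ isT isT) e0 /(_ isT isT) e1.
Qed.

Lemma tref_rot3_tref : amul (amul (tref R) (rot3 R)) (tref R) = ainv (rot3 R).
Proof.
rewrite trefE rot3E /ref90 /rot120 (ainv_hmx (D := 1)); [| lra | apply/eqP; lra].
by rewrite /amul /= !hmx_mul !hmx_mulv hvecN !hvecD; congr pair; hsolve.
Qed.

Lemma aff_eq_refl g : aff_eq g g.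
Proof. by move=> x; exists (aone R); split; [apply: inM1 | rewrite app_aone]. Qed.

Lemma aff_eq_mull m g h : inM m -> aff_eq g h -> aff_eq (amul m g) h.
Proof.
move=> hm gh x; have [m' [hm' e]] := gh x.
by exists (amul m m'); split; [apply: inMM | rewrite !app_amul e].
Qed.

Lemma aff_eq_dih g : inNA g -> exists i j, [/\ (i < 2)%N, (j < 3)%N & aff_eq g (dih i j)].
Proof.
move=> /inNA_coset [i [j [hi hj [m hm ->]]]].
by exists i, j; split=> //; apply/aff_eq_mull/aff_eq_refl.
Qed.

Lemma dih00 : dih 0 0 = aone R.
Proof. exact: amulg1. Qed.

Lemma inNA_aff_eq1 g : inNA g -> aff_eq g (aone R) -> inM g.
Proof.
move=> /inNA_coset [i [j [hi hj [m hm eg]]]] ge.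
have ed : dih i j = amul (ainv m) g.
  by rewrite eg -amulA amulVg ?amul1g //; apply: inM_affine hm.
have e00 : aff_eq (dih i j) (dih 0 0).
  by rewrite ed dih00; apply: aff_eq_mull (inMV hm) ge.
have [ei ej] := dih_inj hi hj (isT : (0 < 2)%N) (isT : (0 < 3)%N) e00.
by rewrite eg ei ej dih00 amulg1.
Qed.

(** * Injectivity of Omega *)

Lemma mx_lat_ext (X Y : 'M[R]_2) : X *m e1 = Y *m e1 -> X *m e2 = Y *m e2 -> X = Y.
Proof.
rewrite [X]hmx_eta [Y]hmx_eta /e1 /e2 /lat !hmx_mulv.
by move=> /hvec_inj [? ?] /hvec_inj [? ?]; hsolve.
Qed.

Lemma centralizes_M_eq1 f : is_affine f -> (forall m, inM m -> aconj f m = m) -> f = aone R.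
Proof.
case: f => a B uB fix_M.
have fixB v : latM v -> B *m v = v.
  by move=> /inM_transl/fix_M; rewrite aconj_transl // => -[].
have eB : B = 1%:M by apply: mx_lat_ext; rewrite mul1mx; apply/fixB/latM_lat.
have fixa A : pointM A -> A *m a = a.
  move=> /inM_linear/fix_M; rewrite aconjE // eB invmx1 mulmx1 !mul1mx addr0 /=.
  by case=> /eqP; rewrite subr_eq0 => /eqP {2}->.
have /fixa : pointM ref0 := pointM_ref0; have /fixa : pointM ref60 := pointM_ref60.
rewrite /aone eB [a]hvec_eta hvec0 /ref0 /ref60 !hmx_mulv.
by move=> /hvec_inj [? ?] /hvec_inj [? ?]; congr pair; hsolve.
Qed.

Lemma aff_eq_out_eq g h : inNA g -> inNA h -> aff_eq g h -> out_eq (aconj g) (aconj h).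
Proof.
move=> hg hh gh; have ug := inNA_affine hg; have uh := inNA_affine hh.
have hs : inM (amul (ainv h) g).
  apply: inNA_aff_eq1; first by apply: inNAM => //; apply: inNAV.
  move=> x; have [m [hm e]] := gh x; exists (aconj (ainv h) m).
  split; first by apply: inNA_aconj (inNAV hh) hm.
  by rewrite app_aone app_amul -e /aconj ainvK // !app_amul.
exists (amul g (ainv h)); split.
  have -> : amul g (ainv h) = aconj h (amul (ainv h) g).
    by rewrite /aconj -amulA amulgV // amul1g.
  exact: inNA_aconj.
have ugh : is_affine (amul g (ainv h)) by apply: affineM => //; apply: affineV.
by move=> m _; rewrite -aconj_comp // amulA amulVg // amulg1.
Qed.

Lemma out_eq_aff_eq g h : inNA g -> inNA h -> out_eq (aconj g) (aconj h) -> aff_eq g h.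
Proof.
move=> hg hh [k [hk gh]]; have ug := inNA_affine hg; have uh := inNA_affine hh.
have uk := inM_affine hk; have ukh : is_affine (amul k h) by apply: affineM.
have : amul (ainv (amul k h)) g = aone R.
  have ukhV := affineV ukh.
  apply: centralizes_M_eq1 => [|m hm]; first exact: affineM.
  by rewrite aconj_comp // gh // -[aconj k (aconj h m)]aconj_comp // aconjK.
move/(congr1 (amul (amul k h))); rewrite -amulA amulgV // amul1g amulg1 => ->.
exact: aff_eq_mull hk (aff_eq_refl h).
Qed.

(** * Isometries *)

Lemma enorm_hvec (x y : R) : enorm (hvec x y) = Num.sqrt (x ^+ 2 + 3 * y ^+ 2).
Proof. by rewrite /enorm /hvec !mxE /= exprMn [s3 R ^+ 2]expr2 s3_sqr. Qed.

Lemma enorm_pointM lam C v : lam = 1 \/ lam = -1 -> pointM C ->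
  enorm ((lam *: C) *m v) = enorm v.
Proof.
rewrite [v]hvec_eta; move: (v 0 0) (v 1 0 / s3 R) => x y.
unfold_pointM; case=> ->; pointM_cases;
  by rewrite hmxZ hmx_mulv !enorm_hvec; congr Num.sqrt; lra.
Qed.

Lemma inNA_isometry g : inNA g -> induces_isometry g.
Proof.
move=> hg x y; have ug := inNA_affine hg; have [lam [C [hl wC eB]]] := inNA_linear hg.
rewrite /odist; congr inf; apply/seteqP; split=> r /= [m [hm ->]].
- exists (aconj (ainv g) m); split; first exact: inNA_aconj (inNAV hg) hm.
  have -> : app m (app g y) = app g (app (aconj (ainv g) m) y).
    by rewrite /aconj ainvK // !app_amul appVK.
  by rewrite app_sub eB enorm_pointM.
- exists (aconj g m); split; first exact: inNA_aconj.
  have -> : app (aconj g m) (app g y) = app g (app m y).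
    by rewrite /aconj !app_amul appK.
  by rewrite app_sub eB enorm_pointM.
Qed.

(** * Surjectivity of Omega *)

Lemma solve_ref0_ref60 (c1 c2 : pt R) : c1 + ref0 *m c1 = 0 -> c2 + ref60 *m c2 = 0 ->
  exists a : pt R, a - ref0 *m a = c1 /\ a - ref60 *m a = c2.
Proof.
rewrite [c1]hvec_eta [c2]hvec_eta hvec0 /ref0 /ref60 !hmx_mulv !hvecD.
move: (c1 0 0) (c1 1 0 / s3 R) (c2 0 0) (c2 1 0 / s3 R) => p1 q1 p2 q2.
move=> /hvec_inj [? ?] /hvec_inj [? ?].
by exists (hvec (q1 / 2 - 2 * q2) (q1 / 2)); rewrite !hmx_mulv !hvecB; split; hsolve.
Qed.

Lemma solve_conj_ref0_ref60 C A1 A2 (c1 c2 : pt R) : pointM C ->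
  C *m ref0 = A1 *m C -> C *m ref60 = A2 *m C ->
  c1 + A1 *m c1 = 0 -> c2 + A2 *m c2 = 0 ->
  exists a : pt R, a - A1 *m a = c1 /\ a - A2 *m a = c2.
Proof.
move=> wC eC1 eC2 hc1 hc2; have uC := pointM_unit wC.
have [a [ea1 ea2]] : exists a : pt R, a - ref0 *m a = invmx C *m c1 /\ a - ref60 *m a = invmx C *m c2.
  apply: solve_ref0_ref60.
    by rewrite mulmxA -(conj_mx_swap uC eC1) -mulmxA -mulmxDr hc1 mulmx0.
  by rewrite mulmxA -(conj_mx_swap uC eC2) -mulmxA -mulmxDr hc2 mulmx0.
exists (C *m a); split.
  by rewrite mulmxA -eC1 -mulmxA -mulmxBr ea1 mulKVmx.
by rewrite mulmxA -eC2 -mulmxA -mulmxBr ea2 mulKVmx.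
Qed.

Definition lat_mx (f1 f2 : pt R) : 'M[R]_2 :=
  hmx (2 * f1 0 0 / 3 - f2 0 0 / 3) (f2 0 0 / 3)
      ((2 * (f1 1 0 / s3 R) - f2 1 0 / s3 R) / 3) (f2 1 0 / s3 R).

Lemma lat_mx_e1 (f1 f2 : pt R) : lat_mx f1 f2 *m e1 = f1.
Proof. by rewrite [RHS]hvec_eta /lat_mx /e1 /lat hmx_mulv; hsolve. Qed.

Lemma lat_mx_e2 (f1 f2 : pt R) : lat_mx f1 f2 *m e2 = f2.
Proof. by rewrite [RHS]hvec_eta /lat_mx /e2 /lat hmx_mulv; hsolve. Qed.

Lemma r12_factor : r12 R = amul (transl e1) (amul (r01 R) (amul (r02 R) (r01 R))).
Proof.
rewrite r12E r01E r02E /amul /transl /= !mul1mx; congr pair.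
  by rewrite !(mulmx0, add0r) addr0.
by rewrite /ref120 /ref0 /ref60 !hmx_mul; hsolve.
Qed.

(* Within M the translations are the elements commuting with all their conjugates,
   a group-theoretic description that every automorphism of M respects. *)
Definition comm_conjugates m := forall n, inM n -> amul m (aconj n m) = amul (aconj n m) m.

Lemma comm_conjugates_transl v : comm_conjugates (transl v).
Proof.
move=> n hn; rewrite aconj_transl; last exact: inM_affine hn.
by rewrite !amul_transl addrC.
Qed.

Lemma comm_conjugates_linear m : inM m -> comm_conjugates m -> m.2 = 1%:M.
Proof.
case: m => b A /inM_char [/= wA lb] hA.
have key w : latM w -> b + A *m (w + b - A *m w) = w + b - A *m w + A *m b.
  move=> lw; have := hA _ (inM_transl lw); rewrite aconjE; last exact: affine_transl.
  by rewrite /transl /amul /= invmx1 !mul1mx !mulmx1 => -[].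
have := key _ (latM_lat 1 0); have := key _ (latM_lat 0 1).
move: wA; rewrite [b]hvec_eta; move: (b 0 0) (b 1 0 / s3 R) => x y.
rewrite /lat; unfold_pointM; pointM_cases => //; rewrite !(hvecD, hmx_mulv, hvecB);
  by move=> /hvec_inj [? ?] /hvec_inj [? ?]; exfalso; lra.
Qed.

Lemma r01_sqr : amul (r01 R) (r01 R) = aone R.
Proof. by rewrite r01E /amul /= mulmx0 addr0 ref0_sqr. Qed.

Lemma r02_sqr : amul (r02 R) (r02 R) = aone R.
Proof. by rewrite r02E /amul /= mulmx0 addr0 ref60_sqr. Qed.

Section Automorphism.
Variable phi : aff R -> aff R.
Hypothesis phi_inM : forall m, inM m -> inM (phi m).
Hypothesis phiM : forall m n, inM m -> inM n -> phi (amul m n) = amul (phi m) (phi n).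
Hypothesis phi_inj : forall m n, inM m -> inM n -> phi m = phi n -> m = n.
Hypothesis phi_surj : forall n, inM n -> exists m, inM m /\ phi m = n.

Lemma phi1 : phi (aone R) = aone R.
Proof.
have u1 := inM_affine (phi_inM inM1).
have e : amul (phi (aone R)) (phi (aone R)) = phi (aone R) by rewrite -phiM ?amul1g //; apply: inM1.
by have := congr1 (amul (ainv (phi (aone R)))) e; rewrite -amulA amulVg // amul1g.
Qed.

Lemma phiV m : inM m -> phi (ainv m) = ainv (phi m).
Proof.
move=> hm; have hmV := inMV hm; have um := inM_affine hm.
by apply: ainv_unique; [apply: inM_affine (phi_inM hm) | rewrite -phiM // amulgV // phi1].
Qed.

Lemma phi_aconj n m : inM n -> inM m -> phi (aconj n m) = aconj (phi n) (phi m).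
Proof.
move=> hn hm; have hnV := inMV hn; have hnm := inMM hn hm.
by rewrite /aconj !phiM ?phiV.
Qed.

Lemma comm_conjugates_phi m : inM m -> comm_conjugates m -> comm_conjugates (phi m).
Proof.
move=> hm cm n /phi_surj [n' [hn' <-]]; have hc := inM_aconj hn' hm.
by rewrite -phi_aconj // -!phiM // cm.
Qed.

Lemma comm_conjugates_phiV m : inM m -> comm_conjugates (phi m) -> comm_conjugates m.
Proof.
move=> hm cm n hn; have hc := inM_aconj hn hm.
apply: phi_inj; try exact: inMM.
by rewrite (phiM hm hc) (phiM hc hm) phi_aconj // cm //; apply: phi_inM.
Qed.

Lemma phi_transl_linear v : latM v -> (phi (transl v)).2 = 1%:M.
Proof.
move=> lv; have ht := inM_transl lv.
exact: comm_conjugates_linear (phi_inM ht) (comm_conjugates_phi ht (comm_conjugates_transl v)).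
Qed.

Definition phi_mx := lat_mx (phi (transl e1)).1 (phi (transl e2)).1.

Lemma phi_transl v : latM v -> phi (transl v) = transl (phi_mx *m v).
Proof.
have transl_of u : latM u -> phi (transl u) = transl (phi (transl u)).1.
  by move=> lu; rewrite [LHS]surjective_pairing phi_transl_linear.
move: v; apply: latM_ind => [||u w lu lw hu hw].
- by rewrite lat_mx_e1 -transl_of //; apply: latM_lat.
- by rewrite lat_mx_e2 -transl_of //; apply: latM_lat.
have hu' := inM_transl lu; have hw' := inM_transl lw.
rewrite -amul_transl -ainv_transl (phiM hu' (inMV hw')) (phiV hw') hu hw.
by rewrite ainv_transl amul_transl mulmxBr.
Qed.

Lemma phi_transl_preimage v : latM v -> exists2 u, latM u & phi_mx *m u = v.
Proof.
move=> lv; have [m [hm em]] := phi_surj (inM_transl lv).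
have m2 : m.2 = 1%:M.
  apply: (comm_conjugates_linear hm); apply: (comm_conjugates_phiV hm).
  by rewrite em; apply: comm_conjugates_transl.
have [_ lm] := inM_pointM_latM hm; exists m.1 => //.
have : phi (transl m.1) = transl v by rewrite -em /transl -m2 -surjective_pairing.
by rewrite phi_transl // => -[].
Qed.

Lemma phi_mx_unit : phi_mx \in unitmx.
Proof.
have [u1 _ eu1] := phi_transl_preimage (latM_lat 1 0).
have [u2 _ eu2] := phi_transl_preimage (latM_lat 0 1).
suff /mulmx1_unit [] : phi_mx *m lat_mx u1 u2 = 1%:M by [].
by apply: mx_lat_ext; rewrite mul1mx -mulmxA ?lat_mx_e1 ?lat_mx_e2.
Qed.

Lemma phi_mx_conj m : inM m -> (phi m).2 *m phi_mx = phi_mx *m m.2.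
Proof.
move=> hm; have um := inM_affine hm; have upm := inM_affine (phi_inM hm).
have [wm _] := inM_pointM_latM hm.
have key v : latM v -> (phi m).2 *m (phi_mx *m v) = phi_mx *m (m.2 *m v).
  move=> lv; have lmv := pointM_latM wm lv; have := phi_aconj hm (inM_transl lv).
  by rewrite aconj_transl // phi_transl // phi_transl // aconj_transl // => -[].
by apply: mx_lat_ext; rewrite -!mulmxA key //; apply: latM_lat.
Qed.

Lemma phi_involution m : inM m -> amul m m = aone R ->
  (phi m).1 + (phi m).2 *m (phi m).1 = 0.
Proof. by move=> hm mm; have := congr1 fst (phiM hm hm); rewrite mm phi1 => /= <-. Qed.

Lemma aut_inner : exists g, inNA g /\ out_eq phi (aconj g).
Proof.
have uB := phi_mx_unit; have h01 := inM_r01; have h02 := inM_r02.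
have [wA1 _] := inM_pointM_latM (phi_inM h01); have [wA2 _] := inM_pointM_latM (phi_inM h02).
have eA1 : phi_mx *m ref0 = (phi (r01 R)).2 *m phi_mx by rewrite phi_mx_conj // r01E.
have eA2 : phi_mx *m ref60 = (phi (r02 R)).2 *m phi_mx by rewrite phi_mx_conj // r02E.
have [C [wC eC1 eC2]] := pointM_conj_ref0_ref60 uB wA1 wA2 eA1 eA2.
have [a [ea1 ea2]] := solve_conj_ref0_ref60 wC eC1 eC2
  (phi_involution h01 r01_sqr) (phi_involution h02 r02_sqr).
pose g : aff R := (a, phi_mx); have ug : is_affine g := uB.
have agr_lin m : inM m -> m.1 = 0 -> a - (phi m).2 *m a = (phi m).1 -> phi m = aconj g m.
  case: m => b A0 hm /= b0 e; subst b; rewrite aconjE //= mulmx0 addr0.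
  by rewrite -(phi_mx_conj hm) mulmxK // e -surjective_pairing.
have agr01 : phi (r01 R) = aconj g (r01 R) by apply: agr_lin => //; rewrite r01E.
have agr02 : phi (r02 R) = aconj g (r02 R) by apply: agr_lin => //; rewrite r02E.
have agr m : inM m -> phi m = aconj g m.
  elim=> {m} [m [->|[->|->]] // | | m n hm ihm hn ihn | m hm ihm].
  - have ht := inM_transl_e1; have h21 := inMM h02 h01; have h121 := inMM h01 h21.
    rewrite r12_factor (phiM ht h121) (phiM h01 h21) (phiM h02 h01).
    rewrite (phi_transl (latM_lat 1 0)) agr01 agr02.
    by rewrite !aconjM // aconj_transl.
  - by rewrite phi1 /aconj amulg1 amulgV.
  - by rewrite phiM // ihm ihn aconjM.
  - by rewrite phiV // ihm aconjV //; apply: inM_affine.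
exists g; split; last by exists (aone R); split=> [|m hm]; [apply: inM1 | rewrite aconj1g agr].
split=> // m; split=> [hm | /phi_surj [m' [hm' e]]]; first by rewrite -agr //; apply: phi_inM.
by rewrite -(aconjK m ug) -e agr // aconjK.
Qed.

End Automorphism.

End P3m1.

Theorem lemma4 (R : realType) :
  (* t-ref. and 3-rot. are affinities of E^2/M *)
  inNA (tref R) /\ inNA (rot3 R) /\
  (* Sym(M) = Aff(M): every affinity is an isometry of the orbifold *)
  (forall g : aff R, inNA g -> induces_isometry g) /\
  (* Sym(M) = Aff(M) = <t-ref., 3-rot.> is dihedral of order 6 *)
  (forall g : aff R, inNA g -> exists (i j : nat), (i < 2)%N /\ (j < 3)%N /\
      aff_eq g (amul (apow (tref R) i) (apow (rot3 R) j))) /\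
  (forall i j i' j' : nat, (i < 2)%N -> (j < 3)%N -> (i' < 2)%N -> (j' < 3)%N ->
      aff_eq (amul (apow (tref R) i) (apow (rot3 R) j))
             (amul (apow (tref R) i') (apow (rot3 R) j')) -> i = i' /\ j = j') /\
  aff_eq (apow (tref R) 2) (aone R) /\ aff_eq (apow (rot3 R) 3) (aone R) /\
  aff_eq (amul (amul (tref R) (rot3 R)) (tref R)) (ainv (rot3 R)) /\
  (* Omega is a homomorphism ... *)
  (forall g h : aff R, inNA g -> inNA h -> forall m, inM m ->
      aconj (amul g h) m = aconj g (aconj h m)) /\
  (* ... well defined and injective ... *)
  (forall g h : aff R, inNA g -> inNA h ->
      (aff_eq g h <-> out_eq (aconj g) (aconj h))) /\
  (* ... and surjective onto Out(M) *)
  (forall phi : aff R -> aff R, is_autM phi ->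
      exists g, inNA g /\ out_eq phi (aconj g)).
Proof.
split; first exact: inNA_tref.
split; first exact: inNA_rot3.
split; first exact: inNA_isometry.
split.
  by move=> g /aff_eq_dih [i [j [hi hj gij]]]; exists i, j.
split; first exact: dih_inj.
split; first by rewrite apow_tref2; apply: aff_eq_refl.
split; first by rewrite apow_rot3_3; apply: aff_eq_refl.
split; first by rewrite tref_rot3_tref; apply: aff_eq_refl.
split; first by move=> g h hg hh m _; apply: aconj_comp; apply: inNA_affine.
split; first by move=> g h hg hh; split; [apply: aff_eq_out_eq | apply: out_eq_aff_eq].
by move=> phi [phi_inM phiM phi_inj phi_surj]; apply: aut_inner phi_inM phiM phi_inj phi_surj.
Qed.
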